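(* Let $\mathcal P$ be a Fitting program over a bilattice $\mathcal B$. Then $Fix^{\mathcal U}_{\mathcal U}\le_k Fix^{\mathcal F}_{\mathcal U}\otimes Fix^{\mathcal T}_{\mathcal U}$.
   Context: A bilattice $\langle\mathcal B,\le_t,\le_k\rangle$ is a nonempty set with two partial orders, each making $\mathcal B$ a lattice with top and bottom. Under $\le_t$, meet and join are $\wedge,\vee$ (infinitary $\bigwedge,\bigvee$), bottom $\mathcal F$, top $\mathcal T$; under $\le_k$, meet and join are $\otimes,\oplus$ (infinitary $\bigotimes,\bigoplus$), bottom $\mathcal U$, top $\mathcal I$. Standing assumptions: $\mathcal B$ is complete for both orders, infinitely distributive, satisfies the infinitary interlacing conditions, and has a negation $\neg$ (an involution reversing $\le_t$ and preserving $\le_k$). A formula is built from literals ($A$ or $\neg A$) and elements of $\mathcal B$ using $\wedge,\vee,\otimes,\oplus,\exists,\forall$ (with built-in predicate $equal$). A clause is $P(x_1,\dots,x_n)\leftarrow\phi(x_1,\dots,x_n)$ with the body's free variables among $x_1,\dots,x_n$. A Fitting program is a finite set of clauses with no predicate letter heading more than one clause; Inst-$\mathcal P$ is its set of ground instances. $\mathcal V(\mathcal B)$: maps from ground atoms to $\mathcal B$ with pointwise orders/operations. Valuations extend to closed formulas compositionally ($v(\beta)=\beta$, connectives pointwise, $\exists$ as $\bigvee$, $\forall$ as $\bigwedge$ over closed-term instances, $v(equal(s,t))=\mathcal T$ if $s=t$ else $\mathcal F$). The contrajoin $v\bigtriangleup w$ evaluates likewise but gives $A$ the value $v(A)$ and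 $\neg A$ the value $\neg w(A)$. For $\alpha\in\{\mathcal F,\mathcal T,\mathcal U,\mathcal I\}$: $\Psi_{\mathcal P}^{\alpha}(v,w)(A)=\alpha$ if $A$ heads no member of Inst-$\mathcal P$, and $=(v\bigtriangleup w)(B)$ if $A\leftarrow B\in$ Inst-$\mathcal P$. $\Psi'^{\alpha}_{\mathcal P}(v)$ is the $\le_t$-least (resp. $\le_t$-greatest, $\le_k$-least, $\le_k$-greatest) fixpoint of $x\mapsto\Psi_{\mathcal P}^{\alpha}(x,v)$ when $\alpha=\mathcal F$ (resp. $\mathcal T,\mathcal U,\mathcal I$), obtained as the limit of the transfinite iteration from the constant valuation $\alpha$. $Fix^{\alpha}_{\mathcal U}$ denotes the $\le_k$-least fixpoint of $\Psi'^{\alpha}_{\mathcal P}$. *)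

From Stdlib Require Import List Arith Bool ClassicalEpsilon.
Import ListNotations.
Set Implicit Arguments.

Record prebilattice := {
  bcar :> Type;
  tle : bcar -> bcar -> Prop;
  kle : bcar -> bcar -> Prop;
  tle_refl : forall x, tle x x;
  tle_trans : forall x y z, tle x y -> tle y z -> tle x z;
  tle_antisym : forall x y, tle x y -> tle y x -> x = y;
  kle_refl : forall x, kle x x;
  kle_trans : forall x y z, kle x y -> kle y z -> kle x z;
  kle_antisym : forall x y, kle x y -> kle y x -> x = y;
  tsup : (bcar -> Prop) -> bcar;
  tinf : (bcar -> Prop) -> bcar;
  ksup : (bcar -> Prop) -> bcar;
  kinf : (bcar -> Prop) -> bcar;
  tsup_ub : forall S x, S x -> tle x (tsup S);
  tsup_least : forall S y, (forall x, S x -> tle x y) -> tle (tsup S) y;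
  tinf_lb : forall S x, S x -> tle (tinf S) x;
  tinf_greatest : forall S y, (forall x, S x -> tle y x) -> tle y (tinf S);
  ksup_ub : forall S x, S x -> kle x (ksup S);
  ksup_least : forall S y, (forall x, S x -> kle x y) -> kle (ksup S) y;
  kinf_lb : forall S x, S x -> kle (kinf S) x;
  kinf_greatest : forall S y, (forall x, S x -> kle y x) -> kle y (kinf S);
  bneg : bcar -> bcar;
  bneg_invol : forall x, bneg (bneg x) = x;
  bneg_tle : forall x y, tle x y -> tle (bneg y) (bneg x);
  bneg_kle : forall x y, kle x y -> kle (bneg x) (bneg y)
}.

Section BinOps.
Variable B : prebilattice.
Definition pair2 (a b : B) : B -> Prop := fun x => x = a \/ x = b.
Definition band (a b : B) : B := tinf B (pair2 a b).
Definition bor (a b : B) : B := tsup B (pair2 a b).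
Definition botimes (a b : B) : B := kinf B (pair2 a b).
Definition boplus (a b : B) : B := ksup B (pair2 a b).
Definition bF : B := tsup B (fun _ => False).
Definition bT : B := tinf B (fun _ => False).
Definition bU : B := ksup B (fun _ => False).
Definition bI : B := kinf B (fun _ => False).

Definition img (I : Type) (f : I -> B) : B -> Prop := fun x => exists i, x = f i.

Definition distrib (o : B -> B -> B) (Sig : (B -> Prop) -> B) : Prop :=
  forall (a : B) (S : B -> Prop), (exists x, S x) ->
    o a (Sig S) = Sig (fun y => exists x, S x /\ y = o a x).

Definition infinitely_distributive : Prop :=
  forall o Sig, In o [band; bor; botimes; boplus] ->
    In Sig [tinf B; tsup B; kinf B; ksup B] -> distrib o Sig.

Definition interlaced : Prop :=
  forall (I : Type) (f g : I -> B),
    ((forall i, kle B (f i) (g i)) ->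
       kle B (tinf B (img f)) (tinf B (img g)) /\ kle B (tsup B (img f)) (tsup B (img g))) /\
    ((forall i, tle B (f i) (g i)) ->
       tle B (kinf B (img f)) (kinf B (img g)) /\ tle B (ksup B (img f)) (ksup B (img g))).
End BinOps.

Record bilattice := {
  bpre :> prebilattice;
  b_distr : infinitely_distributive bpre;
  b_interlaced : interlaced bpre
}.

Record signature := {
  fsym : Type; farity : fsym -> nat;
  psym : Type; parity : psym -> nat
}.

Section Syntax.
Variable S : signature.

Inductive term : Type :=
| Var : nat -> term
| Fn : fsym S -> list term -> term.

Fixpoint gterm (t : term) : bool :=
  match t with
  | Var _ => false
  | Fn f l => Nat.eqb (length l) (farity S f) &&
      (fix all (l : list term) : bool :=
         match l with nil => true | t :: l => gterm t && all l end) l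
  end.

Fixpoint wfterm (t : term) : bool :=
  match t with
  | Var _ => true
  | Fn f l => Nat.eqb (length l) (farity S f) &&
      (fix all (l : list term) : bool :=
         match l with nil => true | t :: l => wfterm t && all l end) l
  end.

Fixpoint tsubst (e : nat -> term) (t : term) : term :=
  match t with
  | Var n => e n
  | Fn f l => Fn f (map (tsubst e) l)
  end.

Fixpoint occurs (x : nat) (t : term) : Prop :=
  match t with
  | Var n => n = x
  | Fn f l => (fix ex (l : list term) : Prop :=
         match l with nil => False | t :: l => occurs x t \/ ex l end) l
  end.

Definition cterm := { t : term | gterm t = true }.

Definition ground_atom (a : psym S * list term) : bool :=
  Nat.eqb (length (snd a)) (parity S (fst a)) && forallb gterm (snd a).
Definition gatom := { a : psym S * list term | ground_atom a = true }.
End Syntax.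

Arguments Var {S}.

Section Formulas.
Variables (S : signature) (B : bilattice).

Inductive atom : Type :=
| PAt : psym S -> list (term S) -> atom
| EqAt : term S -> term S -> atom.

Inductive formula : Type :=
| FPos : atom -> formula
| FNeg : atom -> formula
| FCst : bcar B -> formula
| FAnd : formula -> formula -> formula
| FOr : formula -> formula -> formula
| FOtimes : formula -> formula -> formula
| FOplus : formula -> formula -> formula
| FEx : nat -> formula -> formula
| FAll : nat -> formula -> formula.

Definition wf_atom (a : atom) : Prop :=
  match a with
  | PAt p l => length l = parity S p /\ forallb (@wfterm S) l = true
  | EqAt s t => wfterm s = true /\ wfterm t = true
  end.

Fixpoint wf_formula (phi : formula) : Prop :=
  match phi with
  | FPos a | FNeg a => wf_atom a
  | FCst _ => True
  | FAnd p q | FOr p q | FOtimes p q | FOplus p q => wf_formula p /\ wf_formula q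
  | FEx _ p | FAll _ p => wf_formula p
  end.

Definition occurs_atom (x : nat) (a : atom) : Prop :=
  match a with
  | PAt _ l => exists t, In t l /\ occurs x t
  | EqAt s t => occurs x s \/ occurs x t
  end.

Fixpoint free_in (x : nat) (phi : formula) : Prop :=
  match phi with
  | FPos a | FNeg a => occurs_atom x a
  | FCst _ => False
  | FAnd p q | FOr p q | FOtimes p q | FOplus p q => free_in x p \/ free_in x q
  | FEx y p | FAll y p => y <> x /\ free_in x p
  end.

Definition valuation := gatom S -> bcar B.

Definition upd (e : nat -> term S) (x : nat) (t : term S) : nat -> term S :=
  fun n => if Nat.eqb n x then t else e n.

Definition atom_val (v : valuation) (e : nat -> term S) (a : atom) : bcar B :=
  match a with
  | PAt p l =>
      let a' := (p, map (tsubst e) l) in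
      match ground_atom a' as b return ground_atom a' = b -> bcar B with
      | true => fun h => v (exist _ a' h)
      | false => fun _ => bU B        (* never used for well-formed closed formulas *)
      end eq_refl
  | EqAt s t =>
      if excluded_middle_informative (tsubst e s = tsubst e t) then bT B else bF B
  end.

(* Contrajoin evaluation (v /\ w)(phi) under an assignment e of closed terms to
   the free variables (i.e. the value of the closed formula phi[e]).
   The ordinary value v(phi) is ev v v. *)
Fixpoint ev (v w : valuation) (e : nat -> term S) (phi : formula) : bcar B :=
  match phi with
  | FPos a => atom_val v e a
  | FNeg a => bneg B (atom_val w e a)
  | FCst b => b
  | FAnd p q => @band B (ev v w e p) (ev v w e q)
  | FOr p q => @bor B (ev v w e p) (ev v w e q)
  | FOtimes p q => @botimes B (ev v w e p) (ev v w e q)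
  | FOplus p q => @boplus B (ev v w e p) (ev v w e q)
  | FEx x p => tsup B (fun y => exists t : cterm S, y = ev v w (upd e x (proj1_sig t)) p)
  | FAll x p => tinf B (fun y => exists t : cterm S, y = ev v w (upd e x (proj1_sig t)) p)
  end.

(* A clause  P(x_1,...,x_n) <- phi  : the head predicate is the index in the
   program, cvars = [x_1; ...; x_n] (distinct variables), cbody = phi. *)
Record clause := { cvars : list nat; cbody : formula }.

(* A Fitting program: finitely many clauses, no predicate heading two clauses. *)
Record program := {
  pcl : psym S -> option clause;
  p_finite : exists L : list (psym S), forall p c, pcl p = Some c -> In p L;
  p_wf : forall p c, pcl p = Some c ->
     length (cvars c) = parity S p /\ NoDup (cvars c) /\ wf_formula (cbody c) /\
     (forall x, free_in x (cbody c) -> In x (cvars c))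
}.

Fixpoint env_of (xs : list nat) (ts : list (term S)) (n : nat) : term S :=
  match xs, ts with
  | x :: xs, t :: ts => if Nat.eqb x n then t else env_of xs ts n
  | _, _ => Var n
  end.

Definition vtle (v w : valuation) : Prop := forall A, tle B (v A) (w A).
Definition vkle (v w : valuation) : Prop := forall A, kle B (v A) (w A).
Definition votimes (v w : valuation) : valuation := fun A => @botimes B (v A) (w A).
Definition vtinf (X : valuation -> Prop) : valuation :=
  fun A => tinf B (fun b => exists v, X v /\ b = v A).
Definition vtsup (X : valuation -> Prop) : valuation :=
  fun A => tsup B (fun b => exists v, X v /\ b = v A).
Definition vkinf (X : valuation -> Prop) : valuation :=
  fun A => kinf B (fun b => exists v, X v /\ b = v A).
Definition vksup (X : valuation -> Prop) : valuation :=
  fun A => ksup B (fun b => exists v, X v /\ b = v A).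

(* extremal fixpoints (Knaster–Tarski) of a monotone operator *)
Definition lfp_t (f : valuation -> valuation) : valuation := vtinf (fun x => vtle (f x) x).
Definition gfp_t (f : valuation -> valuation) : valuation := vtsup (fun x => vtle x (f x)).
Definition lfp_k (f : valuation -> valuation) : valuation := vkinf (fun x => vkle (f x) x).
Definition gfp_k (f : valuation -> valuation) : valuation := vksup (fun x => vkle x (f x)).

Variable P : program.

Definition Psi (alpha : bcar B) (v w : valuation) : valuation :=
  fun A => match pcl P (fst (proj1_sig A)) with
           | None => alpha
           | Some c => ev v w (env_of (cvars c) (snd (proj1_sig A))) (cbody c)
           end.

Definition Psi'F (v : valuation) : valuation := lfp_t (fun x => Psi (bF B) x v).
Definition Psi'T (v : valuation) : valuation := gfp_t (fun x => Psi (bT B) x v).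
Definition Psi'U (v : valuation) : valuation := lfp_k (fun x => Psi (bU B) x v).
Definition Psi'I (v : valuation) : valuation := gfp_k (fun x => Psi (bI B) x v).

Definition FixF_U : valuation := lfp_k Psi'F.
Definition FixT_U : valuation := lfp_k Psi'T.
Definition FixU_U : valuation := lfp_k Psi'U.
Definition FixI_U : valuation := lfp_k Psi'I.
End Formulas.

(* Psi^U and Psi^alpha differ only on atoms heading no clause, where Psi^U
   returns U, the least element for <=_k.  Hence a fixpoint of
   Psi^F(., v) or Psi^T(., v) is a <=_k-prefixpoint of Psi^U(., v), so
   Psi'^U(v) <=_k Psi'^F(v) and Psi'^U(v) <=_k Psi'^T(v) for every v; passing
   to <=_k-least fixpoints, which is monotone in the operator, gives
   Fix^U_U <=_k Fix^F_U and Fix^U_U <=_k Fix^T_U. *)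
From Stdlib Require Import List.
Set Implicit Arguments.

Section BilatticeFacts.
Variable B : bilattice.

Lemma kinf_ext (X Y : B -> Prop) : (forall x, X x <-> Y x) -> kinf B X = kinf B Y.
Proof.
  intro H; apply kle_antisym; apply kinf_greatest; intros x Hx; apply kinf_lb, H, Hx.
Qed.

Lemma ksup_ext (X Y : B -> Prop) : (forall x, X x <-> Y x) -> ksup B X = ksup B Y.
Proof.
  intro H; apply kle_antisym; apply ksup_least; intros x Hx; apply ksup_ub, H, Hx.
Qed.

Lemma img_bool_pair2 (a b : B) x :
  img B (fun i : bool => if i then a else b) x <-> pair2 B a b x.
Proof.
  split.
  - intros [[|] ->]; [left | right]; reflexivity.
  - intros [-> | ->]; [exists true | exists false]; reflexivity.
Qed.

Lemma bU_kle (x : B) : kle B (bU B) x.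
Proof. apply ksup_least; intros _ []. Qed.

Lemma botimes_kle_greatest (a b c : B) :
  kle B c a -> kle B c b -> kle B c (botimes B a b).
Proof. intros Ha Hb; apply kinf_greatest; intros x [-> | ->]; assumption. Qed.

Lemma band_tle_mono a a' b b' :
  tle B a a' -> tle B b b' -> tle B (band B a b) (band B a' b').
Proof.
  intros Ha Hb; apply tinf_greatest; intros x [-> | ->].
  - eapply tle_trans; [apply tinf_lb; left; reflexivity | exact Ha].
  - eapply tle_trans; [apply tinf_lb; right; reflexivity | exact Hb].
Qed.

Lemma bor_tle_mono a a' b b' :
  tle B a a' -> tle B b b' -> tle B (bor B a b) (bor B a' b').
Proof.
  intros Ha Hb; apply tsup_least; intros x [-> | ->].
  - eapply tle_trans; [exact Ha | apply tsup_ub; left; reflexivity].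
  - eapply tle_trans; [exact Hb | apply tsup_ub; right; reflexivity].
Qed.

(* Interlacing, applied to the two-element families indexed by [bool]. *)
Lemma botimes_boplus_tle_mono a a' b b' : tle B a a' -> tle B b b' ->
  tle B (botimes B a b) (botimes B a' b') /\ tle B (boplus B a b) (boplus B a' b').
Proof.
  intros Ha Hb.
  destruct (b_interlaced B (fun i : bool => if i then a else b)
                           (fun i => if i then a' else b')) as [_ Hmono].
  destruct Hmono as [Hotimes Hoplus]; [intros [|]; assumption |].
  unfold botimes, boplus.
  rewrite <- (kinf_ext _ _ (img_bool_pair2 a b)), <- (kinf_ext _ _ (img_bool_pair2 a' b')),
          <- (ksup_ext _ _ (img_bool_pair2 a b)), <- (ksup_ext _ _ (img_bool_pair2 a' b')).
  split; assumption.
Qed.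
End BilatticeFacts.

Section Valuations.
Variables (S : signature) (B : bilattice).
Implicit Types (f g : valuation S B -> valuation S B) (x y : valuation S B).

Lemma vkle_trans x y z : vkle x y -> vkle y z -> vkle x z.
Proof. intros Hxy Hyz A; eapply kle_trans; [apply Hxy | apply Hyz]. Qed.

Lemma votimes_vkle_greatest x y z : vkle z x -> vkle z y -> vkle z (votimes x y).
Proof. intros Hx Hy A; apply botimes_kle_greatest; [apply Hx | apply Hy]. Qed.

Lemma lfp_k_lb f x : vkle (f x) x -> vkle (lfp_k f) x.
Proof. intros Hx A; apply kinf_lb; exists x; split; [exact Hx | reflexivity]. Qed.

Lemma lfp_k_mono f g : (forall x, vkle (f x) (g x)) -> vkle (lfp_k f) (lfp_k g).
Proof.
  intros Hfg A; apply kinf_greatest; intros b [x [Hx ->]].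
  apply lfp_k_lb; eapply vkle_trans; [apply Hfg | exact Hx].
Qed.

Definition vtle_mono f : Prop := forall x y, vtle x y -> vtle (f x) (f y).

Lemma lfp_t_fixpoint f : vtle_mono f -> forall A, f (lfp_t f) A = lfp_t f A.
Proof.
  intros Hmono.
  assert (Hlb : forall x, vtle (f x) x -> vtle (lfp_t f) x).
  { intros x Hx A; apply tinf_lb; exists x; split; [exact Hx | reflexivity]. }
  assert (Hpre : vtle (f (lfp_t f)) (lfp_t f)).
  { intro A; apply tinf_greatest; intros b [x [Hx ->]].
    eapply tle_trans; [apply Hmono, Hlb, Hx | apply Hx]. }
  intro A; apply tle_antisym; [apply Hpre | apply Hlb, Hmono, Hpre].
Qed.

Lemma gfp_t_fixpoint f : vtle_mono f -> forall A, f (gfp_t f) A = gfp_t f A.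
Proof.
  intros Hmono.
  assert (Hub : forall x, vtle x (f x) -> vtle x (gfp_t f)).
  { intros x Hx A; apply tsup_ub; exists x; split; [exact Hx | reflexivity]. }
  assert (Hpost : vtle (gfp_t f) (f (gfp_t f))).
  { intro A; apply tsup_least; intros b [x [Hx ->]].
    eapply tle_trans; [apply Hx | apply Hmono, Hub, Hx]. }
  intro A; apply tle_antisym; [apply Hub, Hmono, Hpost | apply Hpost].
Qed.

Lemma atom_val_tle_mono x y e a :
  vtle x y -> tle B (atom_val x e a) (atom_val y e a).
Proof.
  intro Hxy; destruct a as [p l | s t]; simpl; [| apply tle_refl].
  (* Abstract the scrutinee of the dependent match, but not the [ground_atom]
     that types the subset proof [h]. *)
  generalize (@eq_refl bool (ground_atom (p, map (tsubst e) l))).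
  generalize (ground_atom (p, map (tsubst e) l)) at 2 3 7.
  intros [|] h; [apply Hxy | apply tle_refl].
Qed.

Lemma ev_tle_mono x y w phi :
  vtle x y -> forall e, tle B (ev x w e phi) (ev y w e phi).
Proof.
  intro Hxy; induction phi as [a | a | b | p IHp q IHq | p IHp q IHq
                               | p IHp q IHq | p IHp q IHq | z p IHp | z p IHp];
    intro e; simpl.
  - apply atom_val_tle_mono, Hxy.
  - apply tle_refl.
  - apply tle_refl.
  - apply band_tle_mono; auto.
  - apply bor_tle_mono; auto.
  - apply botimes_boplus_tle_mono; auto.
  - apply botimes_boplus_tle_mono; auto.
  - apply tsup_least; intros c [t ->].
    eapply tle_trans; [apply IHp | apply tsup_ub; exists t; reflexivity].
  - apply tinf_greatest; intros c [t ->].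
    eapply tle_trans; [apply tinf_lb; exists t; reflexivity | apply IHp].
Qed.
End Valuations.

Section FittingOperators.
Variables (S : signature) (B : bilattice) (P : program S B).

Lemma Psi_tle_mono alpha w : vtle_mono (fun x => Psi P alpha x w).
Proof.
  intros x y Hxy A; unfold Psi.
  destruct (pcl P _); [apply ev_tle_mono, Hxy | apply tle_refl].
Qed.

Lemma Psi_kle_default alpha beta x w :
  kle B alpha beta -> vkle (Psi P alpha x w) (Psi P beta x w).
Proof. intros Hab A; unfold Psi; destruct (pcl P _); [apply kle_refl | exact Hab]. Qed.

Lemma Psi'U_kle_fixpoint alpha v y :
  (forall A, Psi P alpha y v A = y A) -> vkle (Psi'U P v) y.
Proof.
  intro Hfix; apply lfp_k_lb; intro A; rewrite <- (Hfix A).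
  apply Psi_kle_default, bU_kle.
Qed.

Lemma Psi'U_kle_Psi'F v : vkle (Psi'U P v) (Psi'F P v).
Proof. exact (Psi'U_kle_fixpoint _ _ _ (lfp_t_fixpoint (Psi_tle_mono (bF B) v))). Qed.

Lemma Psi'U_kle_Psi'T v : vkle (Psi'U P v) (Psi'T P v).
Proof. exact (Psi'U_kle_fixpoint _ _ _ (gfp_t_fixpoint (Psi_tle_mono (bT B) v))). Qed.
End FittingOperators.

Theorem corollary1 (S : signature) (B : bilattice) (P : program S B) :
  vkle (FixU_U P) (votimes (FixF_U P) (FixT_U P)).
Proof.
  apply votimes_vkle_greatest; apply lfp_k_mono.
  - apply Psi'U_kle_Psi'F.
  - apply Psi'U_kle_Psi'T.
Qed.
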